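(* Consider the finite game with players $\mathcal{M}=\{1,\dots,M\}$, common action set $\mathcal{N}$ and costs $c_i(\mathbf{a}) = \frac{\sigma^2}{h_{ia_i}}\,\frac{\beta_i}{[1-\sum_{l\in\mathcal{M}_{a_i}(\mathbf{a})}\beta_l]^+}$, and suppose $h_{ij}=h$ for all $i\in\mathcal{M}$, $j\in\mathcal{N}$ (for a constant $h>0$) and $\beta_i=\beta$ for all $i\in\mathcal{M}$ (single class traffic). Then every Nash equilibrium of this game is system optimal, i.e., minimizes $C(\mathbf{a})=\sum_{i=1}^M c_i(\mathbf{a})$ over all $\mathbf{a}\in\mathcal{N}^M$.
   Context: Uplink cellular model: mobiles $\mathcal{M}=\{1,\dots,M\}$, BSs $\mathcal{N}=\{1,\dots,N\}$, power gains $h_{ij}>0$, noise power $\sigma^2>0$, target SINRs $\gamma_i>0$, $\beta_i=\gamma_i/(1+\gamma_i)$. Association profile $\mathbf{a}\in\mathcal{N}^M$, $\mathcal{M}_j(\mathbf{a})=\{l: a_l=j\}$, $[x]^+=\max(x,0)$, positive$/0=+\infty$; $(b,\mathbf{a}_{-i})$ replaces $a_i$ by $b$. $\mathbf{a}$ is a Nash equilibrium if $a_i\in\arg\min_{b\in\mathcal{N}}c_i(b,\mathbf{a}_{-i})$ for all $i$. Standing assumption: there exists at least one feasible association, i.e. some $\mathbf{a}$ with $\sum_{l\in\mathcal{M}_j(\mathbf{a})}\beta_l<1$ for all $j$. *)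

From mathcomp Require Import all_boot all_order all_algebra.
From mathcomp Require Import reals constructive_ereal.
Set Implicit Arguments. Unset Strict Implicit. Unset Printing Implicit Defensive.
Import Order.TTheory GRing.Theory Num.Theory.
Local Open Scope ring_scope.

Definition betaf (R : realType) (M : nat) (gamma : 'I_M -> R) (i : 'I_M) : R :=
  gamma i / (1 + gamma i).

Definition load (R : realType) (M N : nat) (beta : 'I_M -> R)
  (a : 'I_M -> 'I_N) (j : 'I_N) : R :=
  \sum_(l < M | a l == j) beta l.

Definition posp (R : realType) (x : R) : R := Num.max x 0.

Definition cost (R : realType) (M N : nat) (sigma2 : R) (h : 'I_M -> 'I_N -> R)
  (gamma : 'I_M -> R) (a : 'I_M -> 'I_N) (i : 'I_M) : \bar R :=
  let d := posp (1 - load (betaf gamma) a (a i)) in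
  if 0 < d then ((sigma2 / h i (a i)) * (betaf gamma i / d))%:E else +oo%E.

Definition upd (M N : nat) (a : 'I_M -> 'I_N) (i : 'I_M) (b : 'I_N) : 'I_M -> 'I_N :=
  fun l => if l == i then b else a l.

Definition is_NE (R : realType) (M N : nat) (sigma2 : R) (h : 'I_M -> 'I_N -> R)
  (gamma : 'I_M -> R) (a : 'I_M -> 'I_N) : Prop :=
  forall (i : 'I_M) (b : 'I_N),
    (cost sigma2 h gamma a i <= cost sigma2 h gamma (upd a i b) i)%E.

Definition social_cost (R : realType) (M N : nat) (sigma2 : R) (h : 'I_M -> 'I_N -> R)
  (gamma : 'I_M -> R) (a : 'I_M -> 'I_N) : \bar R :=
  (\sum_(i < M) cost sigma2 h gamma a i)%E.

Definition feasible (R : realType) (M N : nat) (gamma : 'I_M -> R)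
  (a : 'I_M -> 'I_N) : Prop :=
  forall j : 'I_N, load (betaf gamma) a j < 1.

(* With a common gain and a common beta = b, user i's cost only depends on the
   number n of users sharing its base station: it is K / (1 - n b), increasing
   in n.  At a Nash equilibrium no user can profit from moving, which forces
   every base station to be feasible and the occupancies to differ by at most
   one.  The social cost is K * sum_j F(n_j) with F x = x / (1 - x b) convex,
   and the total occupancy is M for every association, so a balanced occupancy
   vector minimizes it: F lies above its secant through the two values taken
   at equilibrium, at all naturals. *)
From mathcomp Require Import all_boot all_order all_algebra.
From mathcomp Require Import reals constructive_ereal.
From mathcomp Require Import ring lra.
Set Implicit Arguments. Unset Strict Implicit. Unset Printing Implicit Defensive.
Import Order.TTheory GRing.Theory Num.Theory.
Local Open Scope ring_scope.

Definition occupancy (I J : finType) (a : I -> J) (j : J) : nat :=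
  (\sum_(l | a l == j) 1)%N.

Lemma sum_occupancy (I J : finType) (a : I -> J) :
  (\sum_j occupancy a j)%N = #|I|.
Proof. by rewrite -sum1_card (partition_big a xpredT). Qed.

Lemma occupied (I J : finType) (a : I -> J) (j : J) :
  occupancy a j != 0%N -> exists i, a i = j.
Proof.
case: (pickP (fun l => a l == j)) => [i /eqP <- _|none]; first by exists i.
by rewrite /occupancy big_pred0.
Qed.

Lemma occupancy_upd (M N : nat) (a : 'I_M -> 'I_N) (i : 'I_M) (k : 'I_N) :
  a i != k -> occupancy (upd a i k) k = (occupancy a k).+1.
Proof.
move=> aik; rewrite /occupancy (bigD1 i) /=; last by rewrite /upd eqxx.
rewrite add1n; congr _.+1; apply: eq_bigl => l; rewrite /upd.
by case: (l =P i) => [->|_]; rewrite ?eqxx ?andbF ?andbT ?(negbTE aik).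
Qed.

Lemma balanced_two_values (I : finType) (n : I -> nat) (j0 : I) :
  (forall j k, n j <= (n k).+1)%N ->
  exists jm, forall j, n j = n jm \/ n j = (n jm).+1.
Proof.
move=> balanced; case: (@arg_minnP _ j0 xpredT n isT) => jm _ min_jm.
exists jm => j; have := min_jm j isT; have := balanced j jm.
rewrite leq_eqVlt ltnS => /orP[/eqP ->|le_j]; first by right.
by left; apply/eqP; rewrite eqn_leq le_j.
Qed.

Lemma sum_le_supporting_line (R : numDomainType) (I : finType) (F : R -> R)
    (x x' : I -> R) (q s : R) :
  (forall j, F (x j) = F q + (x j - q) * s) ->
  (forall j, F q + (x' j - q) * s <= F (x' j)) ->
  \sum_j x j = \sum_j x' j ->
  \sum_j F (x j) <= \sum_j F (x' j).
Proof.
move=> on_line above sum_eq; rewrite (eq_bigr _ (fun j _ => on_line j)).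
apply: le_trans (ler_sum _ (fun j _ => above j)).
by rewrite !big_split /= -!mulr_suml !sumrB sum_eq.
Qed.

Definition cell_cost (R : fieldType) (b x : R) : R := x / (1 - x * b).

(* [1 / ((1 - p b) (1 - q b))] is the slope of [cell_cost b] between [q] and [p]. *)
Lemma cell_cost_sub_secant (R : fieldType) (b m p q : R) :
  1 - m * b != 0 -> 1 - p * b != 0 -> 1 - q * b != 0 ->
  cell_cost b m - (cell_cost b q + (m - q) / ((1 - p * b) * (1 - q * b))) =
  b * ((m - q) * (m - p)) / ((1 - m * b) * (1 - p * b) * (1 - q * b)).
Proof.
by move=> m_neq0 p_neq0 q_neq0; rewrite /cell_cost; field; apply/and3P.
Qed.

Lemma nat_sub_mul_sub_adjacent_ge0 (R : realDomainType) (m q : nat) (p : R) :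
  p = q.+1%:R \/ p = q%:R - 1 -> 0 <= (m%:R - q%:R) * (m%:R - p).
Proof.
have [mq|qm] := leqP m q; last first.
  move: qm; rewrite -(ler_nat R) -natr1 => qm.
  by case=> ->; apply: mulr_ge0; lra.
case: (ltnP m q) => [mq'|qm']; last first.
  have -> : m = q by apply/eqP; rewrite eqn_leq mq qm'.
  by rewrite subrr mul0r.
move: mq'; rewrite -(ler_nat R) -natr1 => mq'.
by case=> ->; apply: mulr_le0; lra.
Qed.

Lemma cell_cost_above_secant (R : realFieldType) (b m p q : R) :
  0 <= b -> m * b < 1 -> p * b < 1 -> q * b < 1 -> 0 <= (m - q) * (m - p) ->
  cell_cost b q + (m - q) / ((1 - p * b) * (1 - q * b)) <= cell_cost b m.
Proof.
move=> b_ge0 m_fits p_fits q_fits sign.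
rewrite -subr_gt0 in m_fits; rewrite -subr_gt0 in p_fits; rewrite -subr_gt0 in q_fits.
rewrite -subr_ge0 cell_cost_sub_secant ?gt_eqF //.
by rewrite divr_ge0 ?(mulr_ge0 b_ge0 sign) // ltW // !mulr_gt0.
Qed.

Lemma balanced_cell_cost_le (R : realFieldType) (I : finType) (b : R)
    (n n' : I -> nat) :
  0 <= b -> (forall j, (n j)%:R * b < 1) -> (forall j, (n' j)%:R * b < 1) ->
  (forall j k, n j <= (n k).+1)%N -> (\sum_j n j = \sum_j n' j)%N ->
  \sum_j cell_cost b (n j)%:R <= \sum_j cell_cost b (n' j)%:R.
Proof.
move=> b_ge0 n_fits n'_fits balanced sum_eq.
case: (pickP (@predT I)) => [j0 _|I0]; last by rewrite !big_pred0.
have [jm two_values] := balanced_two_values j0 balanced.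
set q := n jm in two_values.
(* The secant is taken towards [q + 1] if that value occurs, and towards [q - 1] otherwise. *)
pose p : R := if [exists j, n j == q.+1] then q.+1%:R else q%:R - 1.
have p_adjacent : p = q.+1%:R \/ p = q%:R - 1 by rewrite /p; case: ifP; [left|right].
have p_fits : p * b < 1.
  rewrite /p; case: ifP => [/existsP[j /eqP <-]//|_].
  by have := n_fits jm; rewrite -/q mulrBl mul1r; lra.
have n_on_pq j : (n j)%:R = q%:R :> R \/ (n j)%:R = p.
  case: (two_values j) => nj; rewrite nj; first by left.
  right; rewrite /p; case: ifPn => //; rewrite negb_exists => /forallP/(_ j).
  by rewrite nj eqxx.
apply: (sum_le_supporting_line (q := q%:R)
  (s := ((1 - p * b) * (1 - q%:R * b))^-1)); last by rewrite -!natr_sum sum_eq.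
- have neq0 x : x * b < 1 -> 1 - x * b != 0 by rewrite subr_eq0 eq_sym => /lt_eqF->.
  move=> j; apply/eqP; rewrite -subr_eq0.
  rewrite (cell_cost_sub_secant (neq0 _ (n_fits j)) (neq0 _ p_fits) (neq0 _ (n_fits jm))).
  by case: (n_on_pq j) => ->; rewrite ?subrr ?mul0r ?mulr0 ?mul0r.
- move=> j; rewrite cell_cost_above_secant ?(n_fits jm) //.
  exact: nat_sub_mul_sub_adjacent_ge0.
Qed.

Section UniformChannel.

Variables (R : realType) (M N : nat) (sigma2 : R) (h : 'I_M -> 'I_N -> R)
  (gamma : 'I_M -> R) (h0 b0 : R).
Hypotheses (sigma2_gt0 : 0 < sigma2) (h0_gt0 : 0 < h0) (b0_gt0 : 0 < b0).
Hypotheses (h_const : forall i j, h i j = h0) (beta_const : forall i, betaf gamma i = b0).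

Definition fits (n : nat) : bool := n%:R * b0 < 1.

Let K := sigma2 / h0 * b0.

Let K_gt0 : 0 < K. Proof. by rewrite !mulr_gt0 ?invr_gt0. Qed.

Definition user_cost (n : nat) : \bar R :=
  if fits n then (K / (1 - n%:R * b0))%:E else +oo%E.

Lemma load_occupancy (a : 'I_M -> 'I_N) (j : 'I_N) :
  load (betaf gamma) a j = (occupancy a j)%:R * b0.
Proof.
rewrite /load /occupancy natr_sum mulr_suml.
by apply: eq_bigr => i _; rewrite beta_const mul1r.
Qed.

Lemma cost_occupancy (a : 'I_M -> 'I_N) (i : 'I_M) :
  cost sigma2 h gamma a i = user_cost (occupancy a (a i)).
Proof.
rewrite /cost /user_cost /fits load_occupancy h_const beta_const /posp.
set d := 1 - _; have -> : (0 < Num.max d 0) = (0 < d) by rewrite lt_max ltxx orbF.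
rewrite subr_gt0; case: ifPn => // fits_i.
by rewrite max_l ?mulrA // subr_ge0 ltW.
Qed.

Lemma user_cost_ge0 (n : nat) : (0 <= user_cost n)%E.
Proof.
rewrite /user_cost; case: ifPn => [fits_n|_]; last exact: leey.
by rewrite lee_fin divr_ge0 ?(ltW K_gt0) // subr_ge0 ltW.
Qed.

Lemma user_cost_eqy (n : nat) : (user_cost n == +oo)%E = ~~ fits n.
Proof. by rewrite /user_cost; case: ifP. Qed.

Lemma fits_lt (m n : nat) : fits m -> ~~ fits n -> (m < n)%N.
Proof.
rewrite /fits -leNgt => m_fits n_unfit.
by rewrite -(ltr_nat R) -(ltr_pM2r b0_gt0) (lt_le_trans m_fits).
Qed.

Lemma user_cost_le (m n : nat) :
  fits m -> (user_cost m <= user_cost n)%E -> (m <= n)%N.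
Proof.
move=> m_fits; rewrite /user_cost m_fits; case: ifPn => [n_fits|n_unfit _].
  rewrite lee_fin ler_pM2l // lef_pV2 ?posrE ?subr_gt0 //.
  by rewrite lerD2l lerN2 ler_pM2r // ler_nat.
exact/ltnW/fits_lt.
Qed.

Section Equilibrium.

Variable a : 'I_M -> 'I_N.
Hypothesis a_NE : is_NE sigma2 h gamma a.

Lemma NE_user_cost_le (i : 'I_M) (k : 'I_N) : k != a i ->
  (user_cost (occupancy a (a i)) <= user_cost (occupancy a k).+1)%E.
Proof.
move=> k_neq; have := a_NE i k; rewrite !cost_occupancy /upd eqxx.
by rewrite occupancy_upd // eq_sym.
Qed.

(* Pigeonhole: a user at an infeasible base station would move to any other one
   unless all of them would overflow, which leaves no room for a feasible association. *)
Lemma NE_fits : (exists af : 'I_M -> 'I_N, feasible gamma af) ->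
  forall j, fits (occupancy a j).
Proof.
move=> [af af_feasible] j.
have [/eqP->|/occupied[i <-]] := boolP (occupancy a j == 0%N).
  by rewrite /fits mul0r ltr01.
apply/negPn/negP => unfit.
have af_fits k : fits (occupancy af k) by rewrite /fits -load_occupancy.
have lt_ai := fits_lt (af_fits (a i)) unfit.
have le_k k : k != a i -> (occupancy af k <= occupancy a k)%N.
  move=> k_neq; rewrite -ltnS; apply: fits_lt (af_fits k) _.
  rewrite -user_cost_eqy -leye_eq; apply: le_trans (NE_user_cost_le k_neq).
  by rewrite leye_eq user_cost_eqy.
have le_rest :
  (\sum_(k | k != a i) occupancy af k <= \sum_(k | k != a i) occupancy a k)%N.
  exact: leq_sum.
have := leq_add lt_ai le_rest.
have sum_af := sum_occupancy af; have sum_a := sum_occupancy a.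
rewrite (bigD1 (a i)) //= in sum_af; rewrite (bigD1 (a i)) //= in sum_a.
by rewrite addSn sum_af sum_a ltnn.
Qed.

Lemma NE_balanced : (forall j, fits (occupancy a j)) ->
  forall j k, (occupancy a j <= (occupancy a k).+1)%N.
Proof.
move=> a_fits j k.
have [/eqP->//|/occupied[i <-]] := boolP (occupancy a j == 0%N).
have [->|k_neq] := eqVneq k (a i); first exact: leqnSn.
exact: user_cost_le (a_fits _) (NE_user_cost_le k_neq).
Qed.

End Equilibrium.

Lemma social_cost_fits (a : 'I_M -> 'I_N) : (forall j, fits (occupancy a j)) ->
  social_cost sigma2 h gamma a = (K * \sum_j cell_cost b0 (occupancy a j)%:R)%:E.
Proof.
move=> a_fits; rewrite /social_cost.
under eq_bigr => i _ do rewrite cost_occupancy /user_cost a_fits.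
rewrite sumEFin (partition_big a xpredT) //= mulr_sumr; congr _%:E.
apply: eq_bigr => j _; under eq_bigr => i /eqP-> do rewrite -[_ / _]mulr1.
rewrite -mulr_sumr /cell_cost mulrAC -mulrA; congr (_ * (_ / _)).
by rewrite /occupancy natr_sum.
Qed.

Lemma social_cost_unfit (a : 'I_M -> 'I_N) (j : 'I_N) : ~~ fits (occupancy a j) ->
  social_cost sigma2 h gamma a = +oo%E.
Proof.
move=> unfit; have [i ai] : exists i, a i = j.
  by apply: occupied; apply: contraNneq unfit => ->; rewrite /fits mul0r ltr01.
rewrite /social_cost (bigD1 i) //= cost_occupancy ai.
move: unfit; rewrite -user_cost_eqy => /eqP->; rewrite addye // gt_eqF //.
apply: (@lt_le_trans _ _ 0%E); first exact: ltNy0.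
by apply: sume_ge0 => l _; rewrite cost_occupancy user_cost_ge0.
Qed.

Lemma NE_system_optimal (a a' : 'I_M -> 'I_N) :
  (exists af : 'I_M -> 'I_N, feasible gamma af) -> is_NE sigma2 h gamma a ->
  (social_cost sigma2 h gamma a <= social_cost sigma2 h gamma a')%E.
Proof.
move=> feasible_exists a_NE; have a_fits := NE_fits a_NE feasible_exists.
have [a'_fits|] := boolP [forall j, fits (occupancy a' j)]; last first.
  by rewrite negb_forall => /existsP[j /social_cost_unfit->]; exact: leey.
rewrite !social_cost_fits //; last exact/forallP.
rewrite lee_fin ler_pM2l //.
apply: balanced_cell_cost_le (ltW b0_gt0) a_fits _ (NE_balanced a_NE a_fits) _.
  exact/forallP.
by rewrite !sum_occupancy.
Qed.

End UniformChannel.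

Theorem proposition6 (R : realType) (M N : nat) (sigma2 : R)
  (h : 'I_M -> 'I_N -> R) (gamma : 'I_M -> R) (h0 b0 : R) :
  0 < sigma2 ->
  (forall i j, 0 < h i j) ->
  (forall i, 0 < gamma i) ->
  (exists a : 'I_M -> 'I_N, feasible gamma a) ->
  0 < h0 ->
  (forall i j, h i j = h0) ->
  (forall i, betaf gamma i = b0) ->
  forall a : 'I_M -> 'I_N, is_NE sigma2 h gamma a ->
  forall a' : 'I_M -> 'I_N,
    (social_cost sigma2 h gamma a <= social_cost sigma2 h gamma a')%E.
Proof.
move=> sigma2_gt0 _ gamma_gt0 feasible_exists h0_gt0 h_const beta_const a a_NE a'.
case: (pickP (@predT 'I_M)) => [i _|no_user]; last by rewrite /social_cost !big_pred0.
have b0_gt0 : 0 < b0 by rewrite -(beta_const i) /betaf divr_gt0 // addr_gt0.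
exact: NE_system_optimal sigma2_gt0 h0_gt0 b0_gt0 h_const beta_const a a' feasible_exists a_NE.
Qed.
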